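(* Let $n=p_1^{m_1}\cdots p_k^{m_k}$ with $m_i>1$ for at least one $i$. Then the adjacency spectrum (as a multiset) of $\mathcal E_{\mathbb Z_n}(\mathscr U)$ consists of the eigenvalue $0$ with multiplicity $T-m-(2^k-2)$ together with the $2^k-2$ eigenvalues of the symmetric matrix $C_A(\mathscr G)$ indexed by $V(\mathscr G)$, with entries $(C_A)_{II}=0$, $(C_A)_{IJ}=\sqrt{n_In_J}$ if $I\sim J$ in $\mathscr G$, and $(C_A)_{IJ}=0$ otherwise.
   Context: Primes $p_1<\dots<p_k$, positive integers $m_i$. Nonzero proper ideals of $\mathbb Z_n$ are uniquely $\langle p_1^{r_1}\cdots p_k^{r_k}\rangle$, $0\le r_i\le m_i$, $(r_i)\ne(0,\dots,0),(m_1,\dots,m_k)$; essential iff $r_j\ne m_j$ for all $j$. Essential ideal graph $\mathcal E_{\mathbb Z_n}$: vertices nonzero proper ideals, distinct $I,K$ adjacent iff $I+K$ essential. $T=\prod_i(m_i+1)-2$ is the number of vertices, $m=\prod_i m_i-1$ the number of essential nonzero proper ideals. $\mathscr U$ = nonzero proper nonessential ideals, $\mathcal E_{\mathbb Z_n}(\mathscr U)$ the induced subgraph. For $I\in\mathscr U$, $\Xi_I=\{i:r_i=m_i\}$; $[I]=\{J\in\mathscr U:\Xi_J=\Xi_I\}$. $\mathscr G$: vertex set the $2^k-2$ ideals $\langle\prod_{i\in S}p_i^{m_i}\rangle$, $S$ nonempty proper subset of $\{1,\dots,k\}$, $I\sim J$ iff $\Xi_I\cap\Xi_J=\emptyset$.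 For $I\in V(\mathscr G)$, $n_I=|[I]|=\prod_{i\notin\Xi_I}m_i$. *)

From HB Require Import structures.
From mathcomp Require Import all_boot all_order all_algebra.
Set Implicit Arguments. Unset Strict Implicit. Unset Printing Implicit Defensive.
Import Order.TTheory GRing.Theory Num.Theory.

(* Model of the ideals of Z_n (n > 0):
   every ideal of Z_n is <d> = { x in Z_n | d %| x } for a unique divisor d of n;
   <d> is the zero ideal iff d = n, and the whole ring iff d = 1.
   So the nonzero proper ideals are the divisors d of n with 1 < d < n. *)

Definition idealZ (n d : nat) : {set 'I_n} := [set x : 'I_n | d %| x].

Definition essentialb (n d : nat) : bool :=
  [forall e : 'I_n, ((e %| n) && (0 < e)) ==>
     [exists x : 'I_n, [&& 0 < (x : nat), x \in idealZ n d & x \in idealZ n e]]].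

Definition idealsZ (n : nat) : seq nat := [seq d <- divisors n | 1 < d < n].

Definition Uset (n : nat) : seq nat := [seq d <- idealsZ n | ~~ essentialb n d].

(* adjacency matrix of the induced subgraph E_{Z_n}(U):
   I ~ K iff I <> K and I + K = <gcd d e> is essential *)
Definition adjU (R : nzRingType) (n : nat) : 'M[R]_(size (Uset n)) :=
  \matrix_(i, j) (if (i != j) && essentialb n (gcdn (nth 0 (Uset n) i) (nth 0 (Uset n) j))
                  then 1 else 0)%R.

Definition kp (n : nat) : nat := size (primes n).
Definition pr (n i : nat) : nat := nth 0 (primes n) i.
Definition ex (n i : nat) : nat := logn (pr n i) n.

Definition Tn (n : nat) : nat := (\prod_(i < kp n) (ex n i).+1 - 2)%N.
Definition mn (n : nat) : nat := (\prod_(i < kp n) ex n i - 1)%N.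

Definition Xi (n d : nat) : seq nat :=
  [seq i <- iota 0 (kp n) | logn (pr n i) d == ex n i].

Definition nI (n d : nat) : nat := size [seq e <- Uset n | Xi n e == Xi n d].

Definition VG (n : nat) : seq nat :=
  [seq (\prod_(i < kp n | i \in A) pr n i ^ ex n i)%N
  | A : {set 'I_(kp n)} <- enum [set A : {set 'I_(kp n)} | (A != set0) && (A != setT)]].

Definition CA (R : rcfType) (n : nat) : 'M[R]_(size (VG n)) :=
  \matrix_(i, j)
    (if (i != j) && ~~ has (fun a => a \in Xi n (nth 0%N (VG n) j)) (Xi n (nth 0%N (VG n) i))
     then Num.sqrt ((nI n (nth 0%N (VG n) i) * nI n (nth 0%N (VG n) j))%N%:R) else 0)%R.

From HB Require Import structures.
From mathcomp Require Import all_boot all_order all_algebra.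
From mathcomp Require Import zify.
Import Order.TTheory GRing.Theory Num.Theory.

Set Implicit Arguments.
Unset Strict Implicit.
Unset Printing Implicit Defensive.

(* Two nonessential ideals I, J of Z_n are adjacent iff Xi_I and Xi_J are disjoint,
   since I + J = <gcdn d e> and <d> is essential iff no exponent of d is maximal.
   Adjacency in E(U) thus only depends on the classes [I], and the adjacency matrix is
   the blow-up M C M^T of the 0/1 adjacency matrix C of G along the class map, M being
   its incidence matrix. Sylvester's identity X^q det(X - A B) = X^p det(X - B A) gives
   X^|V(G)| chi(M C M^T) = X^|U| chi(C M^T M), with M^T M = D the diagonal of the n_I;
   and C_A = D^(1/2) C D^(1/2) has the same characteristic polynomial as C D.
   The sizes |U| = T - m and |V(G)| = 2^k - 2 come from counting divisors of n through
   their exponent vectors. *)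

Lemma logn_prod (I : finType) (P : pred I) (F : I -> nat) q :
  (forall i, 0 < F i) -> logn q (\prod_(i | P i) F i) = \sum_(i | P i) logn q (F i).
Proof.
move=> F_gt0; suff : 0 < \prod_(i | P i) F i /\
  logn q (\prod_(i | P i) F i) = \sum_(i | P i) logn q (F i) by case.
elim/big_rec2: _ => [|i x y _ [y_gt0 ey]]; first by rewrite logn1.
by rewrite muln_gt0 y_gt0 F_gt0 lognM // ey.
Qed.

Lemma card_nth (T : Type) (x0 : T) (s : seq T) (P : pred T) :
  #|[pred a : 'I_(size s) | P (nth x0 s a)]| = count P s.
Proof. by rewrite -sum1_count (big_nth x0) big_mkord sum1_card. Qed.

Section Exponents.
Variable n : nat.
Hypothesis n_gt0 : 0 < n.
Local Notation k := (kp n).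

Lemma mem_pr i : i < k -> pr n i \in primes n.
Proof. exact: mem_nth. Qed.

Lemma prime_pr i : i < k -> prime (pr n i).
Proof. by move=> /mem_pr; rewrite mem_primes => /andP[]. Qed.

Lemma pr_inj : injective (fun i : 'I_k => pr n i).
Proof.
by move=> i j /(uniqP 0 (primes_uniq n)) eq_ij; apply/val_inj/eq_ij; rewrite inE.
Qed.

Lemma ex_gt0 i : i < k -> 0 < ex n i.
Proof. by move=> /mem_pr; rewrite /ex logn_gt0. Qed.

Lemma primes_pr q : q \in primes n -> exists j : 'I_k, q = pr n j.
Proof.
move=> qn; have qk : index q (primes n) < k by rewrite index_mem.
by exists (Ordinal qk); rewrite /pr nth_index.
Qed.

Definition expprod (e : 'I_k -> nat) : nat := \prod_(i < k) pr n i ^ e i.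

Lemma expprod_gt0 e : 0 < expprod e.
Proof. by rewrite prodn_gt0 // => i; rewrite expn_gt0 prime_gt0 ?prime_pr. Qed.

Lemma logn_expprod q e :
  logn q (expprod e) = \sum_(i < k) (q == pr n i) * e i.
Proof.
rewrite logn_prod => [|i]; last by rewrite expn_gt0 prime_gt0 ?prime_pr.
by apply: eq_bigr => i _; rewrite lognX logn_prime ?prime_pr // mulnC.
Qed.

Lemma logn_pr_expprod e (j : 'I_k) : logn (pr n j) (expprod e) = e j.
Proof.
rewrite logn_expprod (bigD1 j) //= eqxx mul1n big1 ?addn0 // => i ij.
case: eqP => [/pr_inj ji|]; last by rewrite mul0n.
by rewrite ji eqxx in ij.
Qed.

Lemma logn_expprod_notin e q : q \notin primes n -> logn q (expprod e) = 0.
Proof.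
move=> qn; rewrite logn_expprod big1 // => i _.
by case: eqP => [qi|]; rewrite ?mul0n // qi mem_pr in qn.
Qed.

Lemma expprod_ex : expprod (fun i => ex n i) = n.
Proof.
apply: eqn_from_log => // [|q]; first exact: expprod_gt0.
have [qn|qn] := boolP (q \in primes n).
  by have [j ->] := primes_pr qn; rewrite logn_pr_expprod.
by rewrite logn_expprod_notin //; apply/esym/eqP; rewrite -leqn0 leqNgt logn_gt0.
Qed.

Lemma expprod_dvdn (e : 'I_k -> nat) : (forall i, e i <= ex n i) -> expprod e %| n.
Proof.
move=> e_le; rewrite -[X in _ %| X]expprod_ex /expprod.
apply: (big_ind2 (fun x y => x %| y)) => // [x1 x2 y1 y2|i _]; first exact: dvdn_mul.
by rewrite dvdn_exp2l.
Qed.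

Lemma expprod_logn d : d %| n -> expprod (fun i => logn (pr n i) d) = d.
Proof.
move=> dn; apply: eqn_from_log => [||q]; [exact: expprod_gt0 | exact: dvdn_gt0 dn |].
have [qn|qn] := boolP (q \in primes n).
  by have [j ->] := primes_pr qn; rewrite logn_pr_expprod.
rewrite logn_expprod_notin //; apply/esym/eqP; rewrite -leqn0 leqNgt logn_gt0.
by apply: contra qn; rewrite !mem_primes n_gt0 => /and3P[-> _ /dvdn_trans->].
Qed.

Lemma eqn_dvdn_logn d e : d %| n -> e %| n ->
  (d == e) = [forall j : 'I_k, logn (pr n j) d == logn (pr n j) e].
Proof.
move=> dn en; apply/eqP/forallP => [-> //|eq_de].
rewrite -(expprod_logn dn) -(expprod_logn en).
by apply: eq_bigr => i _; rewrite (eqP (eq_de i)).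
Qed.

Lemma lcmn_eqn d e : d %| n -> e %| n ->
  (lcmn d e == n) =
  [forall j : 'I_k, (logn (pr n j) d == ex n j) || (logn (pr n j) e == ex n j)].
Proof.
move=> dn en; rewrite eqn_dvdn_logn ?dvdn_lcm ?dn //; apply: eq_forallb => j.
rewrite logn_lcm ?(dvdn_gt0 n_gt0) //.
have := dvdn_leq_log (pr n j) n_gt0 dn; have := dvdn_leq_log (pr n j) n_gt0 en.
rewrite /ex; lia.
Qed.

(* In Z_n, <d> and <e> intersect in <lcmn d e>, which is zero iff lcmn d e = n. *)
Lemma essentialb_lcmn d : d %| n ->
  essentialb n d = [forall e : 'I_n, (e %| n) && (0 < e) ==> (lcmn d e != n)].
Proof.
move=> dn; apply: eq_forallb => e; case/boolP: ((e %| n) && (0 < e)) => //= /andP[en e_gt0].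
have d_gt0 := dvdn_gt0 n_gt0 dn.
apply/existsP/idP => [[x]|lcm_ne].
  rewrite !inE => /and3P[x_gt0 d_x e_x]; apply: contraTneq (ltn_ord x) => lcm_n.
  have : lcmn d e <= x by rewrite dvdn_leq // dvdn_lcm d_x.
  by rewrite lcm_n leqNgt.
have lcm_lt : lcmn d e < n by rewrite ltn_neqAle lcm_ne dvdn_leq // dvdn_lcm dn.
by exists (Ordinal lcm_lt); rewrite !inE /= lcmn_gt0 d_gt0 e_gt0 dvdn_lcml dvdn_lcmr.
Qed.

Lemma essentialbE d : d %| n ->
  essentialb n d = [forall j : 'I_k, logn (pr n j) d != ex n j].
Proof.
move=> dn; rewrite essentialb_lcmn //; apply/forallP/forallP => [lcm_ne j|d_ne e].
  apply/eqP => d_j; pose e := expprod (fun i => if i == j then 0 else ex n i).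
  have en : e %| n by apply: expprod_dvdn => i; case: eqP.
  have e_lt : e < n.
    rewrite ltn_neqAle dvdn_leq // andbT; apply/eqP => /(congr1 (logn (pr n j))).
    by rewrite logn_pr_expprod eqxx => ex0; have := ex_gt0 (ltn_ord j); rewrite /ex -ex0.
  have := lcm_ne (Ordinal e_lt); rewrite /= en expprod_gt0 lcmn_eqn //= => /forallPn[i].
  by rewrite logn_pr_expprod; case: (eqVneq i j) => [->|_]; rewrite ?d_j eqxx ?orbT.
apply/implyP => /andP[en e_gt0]; rewrite lcmn_eqn //.
apply: contraTN (ltn_ord e) => /forallP e_ex; rewrite -leqNgt.
suff /eqP -> : (e : nat) == n by [].
rewrite eqn_dvdn_logn //; apply/forallP => j.
by have := e_ex j; rewrite (negbTE (d_ne j)).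
Qed.

Lemma mem_Xi d i : (i \in Xi n d) = (i < k) && (logn (pr n i) d == ex n i).
Proof. by rewrite mem_filter mem_iota add0n andbC. Qed.

Lemma has_Xi d (P : pred nat) :
  has P (Xi n d) = [exists j : 'I_k, (logn (pr n j) d == ex n j) && P j].
Proof.
apply/hasP/existsP => [[i]|[j /andP[dj Pj]]].
  by rewrite mem_Xi => /andP[ik di] Pi; exists (Ordinal ik); rewrite di.
by exists (val j); rewrite // mem_Xi ltn_ord.
Qed.

Lemma essentialb_Xi d : d %| n -> essentialb n d = (Xi n d == [::]).
Proof.
move=> dn; rewrite essentialbE // -size_eq0 -leqn0 leqNgt -has_predT has_Xi negb_exists.
by apply: eq_forallb => j; rewrite andbT.
Qed.

Lemma essentialb_gcdn d e : d %| n -> e %| n ->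
  essentialb n (gcdn d e) = ~~ has (fun a => a \in Xi n e) (Xi n d).
Proof.
move=> dn en; rewrite essentialbE ?(dvdn_trans (dvdn_gcdl d e)) // has_Xi negb_exists.
apply: eq_forallb => j; rewrite mem_Xi ltn_ord logn_gcd ?(dvdn_gt0 n_gt0) //=.
have := dvdn_leq_log (pr n j) n_gt0 dn; have := dvdn_leq_log (pr n j) n_gt0 en.
rewrite /ex; lia.
Qed.

Local Notation exponents := {dffun forall i : 'I_k, 'I_(ex n i).+1}.

Definition expprod_of (f : exponents) : nat := expprod (fun i => f i).

Lemma expprod_of_dvdn f : expprod_of f %| n.
Proof. by apply: expprod_dvdn => i; apply: ltn_ord (f i). Qed.

Lemma expprod_of_inj : injective expprod_of.
Proof.
move=> f g fg; apply/ffunP => i; have := logn_pr_expprod (fun i => f i) i.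
by rewrite [expprod _]fg logn_pr_expprod => /val_inj.
Qed.

Lemma count_divisors (Q : pred nat) :
  count Q (divisors n) = #|[pred f : exponents | Q (expprod_of f)]|.
Proof.
rewrite -size_filter -(size_image expprod_of); apply: perm_size.
apply: uniq_perm; first by rewrite filter_uniq ?divisors_uniq.
  by rewrite map_inj_uniq ?enum_uniq //; apply: expprod_of_inj.
move=> d; rewrite mem_filter -dvdn_divisors //; apply/andP/imageP => [[Qd dn]|[f Qf ->]].
  pose f : exponents := [ffun i : 'I_k => @inord (ex n i) (logn (pr n i) d)].
  have fd : expprod_of f = d.
    rewrite -[RHS](expprod_logn dn); apply: eq_bigr => i _.
    by rewrite ffunE inordK // ltnS dvdn_leq_log.
  by exists f; rewrite // inE fd.
by move: Qf; rewrite inE => Qf; rewrite Qf expprod_of_dvdn.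
Qed.

Lemma size_divisors : size (divisors n) = \prod_(i < k) (ex n i).+1.
Proof.
rewrite -count_predT count_divisors card_dep_ffun foldrE big_map big_enum /=.
by apply: eq_bigr => i _; rewrite card_ord.
Qed.

Lemma count_essentialb : count (essentialb n) (divisors n) = \prod_(i < k) ex n i.
Proof.
rewrite count_divisors.
pose below_max := family (fun i : 'I_k => predC1 (@ord_max (ex n i))).
transitivity #|(below_max : simpl_pred exponents)|.
  apply: eq_card => f; rewrite !inE essentialbE ?expprod_of_dvdn //.
  apply/forallP/familyP => f_ne i; have := f_ne i;
    by rewrite inE logn_pr_expprod -val_eqE.
apply: etrans (card_family _) _; rewrite foldrE big_map big_enum /=.
by apply: eq_bigr => i _; rewrite cardC1 card_ord.
Qed.

Lemma mem_Uset d : (d \in Uset n) = [&& d %| n, 1 < d < n & ~~ essentialb n d].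
Proof.
rewrite !mem_filter -dvdn_divisors //.
by case: (d %| n); case: (1 < d < n); case: (essentialb n d).
Qed.

Lemma essentialb1 : essentialb n 1.
Proof.
by rewrite essentialbE ?dvd1n //; apply/forallP => i; rewrite logn1 eq_sym -lt0n ex_gt0.
Qed.

Lemma essentialb_id : 0 < k -> ~~ essentialb n n.
Proof.
move=> k_gt0; rewrite essentialbE // negb_forall.
by apply/existsP; exists (Ordinal k_gt0); rewrite negbK.
Qed.

Lemma size_Uset : 0 < k -> size (Uset n) = Tn n - mn n.
Proof.
(* 1 is essential and n is not, so U consists of the nonessential divisors but n. *)
move=> k_gt0; pose nonessential d := ~~ essentialb n d && (d != n).
have sizeU : size (Uset n) = count nonessential (divisors n).
  rewrite size_filter count_filter; apply: eq_in_count => d; rewrite -dvdn_divisors // => dn.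
  have [-> | d_ne1] := eqVneq d 1; first by rewrite /nonessential /= essentialb1.
  rewrite /nonessential /= [1 < d]ltn_neqAle eq_sym d_ne1 (dvdn_gt0 n_gt0 dn) /=.
  by rewrite ltn_neqAle dvdn_leq // andbT.
have countU : count nonessential (divisors n) + 1 = count (predC (essentialb n)) (divisors n).
  have count_n : count (pred1 n) (divisors n) = 1.
    by rewrite (count_uniq_mem _ (divisors_uniq n)) divisors_id.
  rewrite -count_n -[RHS]addn0 -(count_pred0 (divisors n)) -[LHS]count_predUI.
  congr (_ + _); apply: eq_count => d /=.
    by rewrite /nonessential /=; case: eqP => [->|]; rewrite ?essentialb_id ?andbT ?orbF.
  by rewrite /nonessential /= -andbA andNb andbF.
have := count_predC (essentialb n) (divisors n).
rewrite count_essentialb size_divisors /Tn /mn sizeU.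
have : 0 < \prod_(i < k) ex n i by rewrite prodn_gt0 // => i; rewrite ex_gt0.
lia.
Qed.

Definition proper_sets := [set A : {set 'I_k} | (A != set0) && (A != setT)].

Definition prod_pow_set (A : {set 'I_k}) : nat := \prod_(i < k | i \in A) pr n i ^ ex n i.

Lemma VGE : VG n = [seq prod_pow_set A | A <- enum proper_sets].
Proof. by []. Qed.

Lemma prod_pow_setE A : prod_pow_set A = expprod (fun i => if i \in A then ex n i else 0).
Proof. by rewrite /prod_pow_set /expprod big_mkcond; apply: eq_bigr => i _; case: ifP. Qed.

Lemma logn_prod_pow_set A (j : 'I_k) :
  logn (pr n j) (prod_pow_set A) = if j \in A then ex n j else 0.
Proof. by rewrite prod_pow_setE logn_pr_expprod. Qed.

Lemma mem_Xi_prod_pow_set A (j : 'I_k) : (val j \in Xi n (prod_pow_set A)) = (j \in A).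
Proof.
rewrite mem_Xi ltn_ord logn_prod_pow_set; case: ifP => _; rewrite ?eqxx //.
by have := ex_gt0 (ltn_ord j); rewrite lt0n eq_sym => /negbTE.
Qed.

Lemma Xi_prod_pow_set_inj : injective (fun A => Xi n (prod_pow_set A)).
Proof. by move=> A B AB; apply/setP => j; rewrite -!mem_Xi_prod_pow_set /= AB. Qed.

Lemma prod_pow_set_Uset A : A \in proper_sets -> prod_pow_set A \in Uset n.
Proof.
rewrite inE => /andP[/set0Pn[j jA]]; rewrite eqEsubset subsetT /= => /subsetPn[j' _ j'A].
have pow_dvdn : prod_pow_set A %| n by rewrite prod_pow_setE expprod_dvdn // => i; case: ifP.
have pow_gt0 : 0 < prod_pow_set A by rewrite prod_pow_setE expprod_gt0.
have logn_j := logn_prod_pow_set A j; rewrite jA in logn_j.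
have logn_j' := logn_prod_pow_set A j'; rewrite (negbTE j'A) in logn_j'.
rewrite mem_Uset pow_dvdn essentialbE //= negb_forall -andbA; apply/and3P; split.
- rewrite ltn_neqAle pow_gt0 andbT; apply: contraTneq (ex_gt0 (ltn_ord j)) => pow1.
  by rewrite -logn_j -pow1 logn1.
- rewrite ltn_neqAle dvdn_leq // andbT; apply: contraTneq (ex_gt0 (ltn_ord j')) => pow_n.
  by move: logn_j'; rewrite pow_n /ex => ->.
- by apply/existsP; exists j; rewrite logn_j negbK.
Qed.

Lemma size_VG : 0 < k -> size (VG n) = 2 ^ k - 2.
Proof.
move=> k_gt0; rewrite VGE size_map -cardE.
have set0_ne_setT : (set0 : {set 'I_k}) != setT.
  by apply/eqP => /setP /(_ (Ordinal k_gt0)); rewrite !inE.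
have -> : proper_sets = [set: {set 'I_k}] :\ set0 :\ setT.
  by apply/setP => A; rewrite !inE andbT andbC.
have := cardsD1 setT ([set: {set 'I_k}] :\ set0); have := cardsD1 set0 [set: {set 'I_k}].
rewrite !inE eq_sym set0_ne_setT -powersetT card_powerset cardsT card_ord /=.
by move=> -> ->; rewrite !add1n subn2.
Qed.

Definition full_exponents d : {set 'I_k} := [set j : 'I_k | logn (pr n j) d == ex n j].

Lemma Xi_full_exponents d : Xi n d = Xi n (prod_pow_set (full_exponents d)).
Proof.
apply: eq_in_filter => i; rewrite mem_iota add0n => /andP[_ ik].
have := mem_Xi_prod_pow_set (full_exponents d) (Ordinal ik).
by rewrite mem_Xi ik inE.
Qed.

Lemma full_exponents_proper d : d \in Uset n -> full_exponents d \in proper_sets.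
Proof.
rewrite mem_Uset => /and3P[dn /andP[_ d_lt] d_ness]; rewrite inE; apply/andP; split.
  move: d_ness; rewrite essentialbE // negb_forall => /existsP[j d_j].
  by apply/set0Pn; exists j; rewrite inE; apply/negPn.
apply: contraTneq d_lt => d_full; rewrite -leqNgt.
suff /eqP -> : d == n by [].
rewrite eqn_dvdn_logn //; apply/forallP => j.
have : j \in full_exponents d by rewrite d_full inE.
by rewrite inE.
Qed.

Lemma size_VG_leq_Uset : size (VG n) <= size (Uset n).
Proof.
apply: uniq_leq_size => [|d].
  rewrite VGE map_inj_uniq ?enum_uniq // => A B AB.
  by apply: Xi_prod_pow_set_inj; rewrite /= AB.
by rewrite VGE => /mapP[A]; rewrite mem_enum => A_proper ->; apply: prod_pow_set_Uset.
Qed.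

End Exponents.

Local Open Scope ring_scope.

Lemma det_scalar_sub_mulmxC (R : comNzRingType) (p q : nat)
    (A : 'M[R]_(p, q)) (B : 'M[R]_(q, p)) (x : R) :
  x ^+ q * \det (x%:M - A *m B) = x ^+ p * \det (x%:M - B *m A).
Proof.
set Q := block_mx (x%:M : 'M_p) A B (1%:M : 'M_q).
have eqA : block_mx 1%:M (- A) 0 x%:M *m Q = block_mx (x%:M - A *m B) 0 (x *: B) x%:M.
  rewrite mulmx_block !mul1mx !mul0mx !add0r !mulNmx !mulmx1 subrr.
  by rewrite mul_scalar_mx.
have eqB : block_mx 1%:M 0 (- B) x%:M *m Q = block_mx x%:M A 0 (x%:M - B *m A).
  rewrite mulmx_block !mul1mx !mul0mx !addr0 !mulNmx mulmx1 mul_scalar_mx.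
  by rewrite mul_mx_scalar addNr addrC.
have := congr1 determinant eqA; have := congr1 determinant eqB.
by rewrite !det_mulmx !det_ublock !det_lblock !det_scalar => <- ->; rewrite mulrC.
Qed.

Lemma char_poly_mulmxC (R : comNzRingType) (p q : nat)
    (A : 'M[R]_(p, q)) (B : 'M[R]_(q, p)) :
  'X ^+ q * char_poly (A *m B) = 'X ^+ p * char_poly (B *m A).
Proof. by rewrite /char_poly /char_poly_mx !map_mxM; apply: det_scalar_sub_mulmxC. Qed.

Lemma char_poly_mulmxC_sq (R : idomainType) (p : nat) (A B : 'M[R]_p) :
  char_poly (A *m B) = char_poly (B *m A).
Proof.
apply: (@mulfI _ ('X ^+ p)); first by rewrite expf_neq0 ?polyX_eq0.
exact: char_poly_mulmxC.
Qed.

Section BlowUp.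
Variables (R : comNzRingType) (N K : nat) (phi : 'I_N -> 'I_K).

Definition fiber_card (v : 'I_K) : nat := #|[pred a | phi a == v]|.

Definition incidence_mx : 'M[R]_(N, K) := \matrix_(a, v) (phi a == v)%:R.

Lemma mul_incidence_mx p (X : 'M[R]_(K, p)) a j : (incidence_mx *m X) a j = X (phi a) j.
Proof.
rewrite !mxE (bigD1 (phi a)) //= mxE eqxx mul1r big1 ?addr0 // => v /negbTE nv.
by rewrite mxE eq_sym nv mul0r.
Qed.

Lemma mul_mx_incidence_tr p (X : 'M[R]_(p, K)) i b :
  (X *m incidence_mx^T) i b = X i (phi b).
Proof.
rewrite !mxE (bigD1 (phi b)) //= !mxE eqxx mulr1 big1 ?addr0 // => v /negbTE nv.
by rewrite !mxE eq_sym nv mulr0.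
Qed.

Lemma incidence_tr_mul :
  incidence_mx^T *m incidence_mx = diag_mx (\row_v (fiber_card v)%:R).
Proof.
apply/matrixP => v v'; rewrite !mxE.
rewrite (eq_bigr (fun a => if phi a == v then (v == v')%:R else 0)); last first.
  by move=> a _; rewrite !mxE; case: eqP => [->|_]; rewrite ?mul0r ?mul1r.
by rewrite -big_mkcond sumr_const; case: eqP => [->|_]; rewrite ?mul0rn ?mulr0n.
Qed.

Lemma char_poly_blowup (C : 'M[R]_K) :
  'X ^+ K * char_poly (\matrix_(a, b) C (phi a) (phi b)) =
  'X ^+ N * char_poly (C *m diag_mx (\row_v (fiber_card v)%:R)).
Proof.
have -> : \matrix_(a, b) C (phi a) (phi b) = incidence_mx *m (C *m incidence_mx^T).
  by apply/matrixP => a b; rewrite mul_incidence_mx mul_mx_incidence_tr mxE.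
by rewrite char_poly_mulmxC -mulmxA incidence_tr_mul.
Qed.

End BlowUp.

Lemma char_poly_conj_diag (R : idomainType) (K : nat) (C : 'M[R]_K) (s : 'I_K -> R) :
  char_poly (\matrix_(i, j) (s i * C i j * s j)) =
  char_poly (C *m diag_mx (\row_j s j ^+ 2)).
Proof.
have -> : \matrix_(i, j) (s i * C i j * s j) =
          diag_mx (\row_j s j) *m (C *m diag_mx (\row_j s j)).
  by apply/matrixP => i j; rewrite mul_diag_mx mul_mx_diag !mxE mulrA.
rewrite char_poly_mulmxC_sq -mulmxA mulmx_diag; congr (char_poly (_ *m diag_mx _)).
by apply/rowP => j; rewrite !mxE expr2.
Qed.

Section ClassMap.
Variables (R : rcfType) (n : nat).
Hypothesis n_gt0 : (0 < n)%N.

Local Notation N := (size (Uset n)).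
Local Notation K := (size (VG n)).
Let u (a : 'I_N) : nat := nth 0%N (Uset n) a.
Let w (v : 'I_K) : nat := nth 0%N (VG n) v.
Let V (v : 'I_K) : {set 'I_(kp n)} := nth set0 (enum (proper_sets n)) v.

Lemma size_enum_proper_sets : size (enum (proper_sets n)) = K.
Proof. by rewrite VGE size_map. Qed.

Lemma nth_VGE v : w v = prod_pow_set (V v).
Proof. by rewrite /w [X in nth _ X]VGE (nth_map set0) // size_enum_proper_sets. Qed.

Lemma Xi_nth_VG_inj v v' : Xi n (w v) = Xi n (w v') -> v = v'.
Proof.
rewrite !nth_VGE => /Xi_prod_pow_set_inj /eqP.
by rewrite nth_uniq ?enum_uniq ?size_enum_proper_sets // => /eqP /val_inj.
Qed.

Lemma exists_Xi_nth_VG a : exists v : 'I_K, Xi n (u a) = Xi n (w v).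
Proof.
have proper := full_exponents_proper n_gt0 (mem_nth 0%N (ltn_ord a)).
have v_lt : (index (full_exponents n (u a)) (enum (proper_sets n)) < K)%N.
  by rewrite -size_enum_proper_sets index_mem mem_enum.
by exists (Ordinal v_lt); rewrite nth_VGE /V nth_index ?mem_enum -?Xi_full_exponents.
Qed.

Lemma nth_Uset_dvdn a : (u a %| n)%N.
Proof. by have := mem_nth 0%N (ltn_ord a); rewrite mem_Uset // => /andP[]. Qed.

Lemma Xi_nth_Uset_neq_nil a : Xi n (u a) != [::].
Proof.
have := mem_nth 0%N (ltn_ord a); rewrite mem_Uset // => /and3P[a_dvdn _].
by rewrite essentialb_Xi.
Qed.

Variable phi : 'I_N -> 'I_K.
Hypothesis phiP : forall a, Xi n (u a) = Xi n (w (phi a)).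

Let adjG : 'M[R]_K := \matrix_(i, j)
  (if (i != j) && ~~ has (fun x => x \in Xi n (w j)) (Xi n (w i)) then 1 else 0).

Lemma adjU_blowup : adjU R n = \matrix_(a, b) adjG (phi a) (phi b).
Proof.
apply/matrixP => a b; rewrite !mxE.
rewrite (essentialb_gcdn n_gt0 (nth_Uset_dvdn a) (nth_Uset_dvdn b)) -!phiP.
congr (if _ then _ else _); have [_|disjoint] := boolP (has _ _); rewrite ?andbF //= !andbT.
have Xi_neq : Xi n (u a) != Xi n (u b).
  apply: contraNneq disjoint => <-; case: (Xi n (u a)) (Xi_nth_Uset_neq_nil a) => //= x s _.
  by rewrite mem_head.
apply/idP/idP => _; first by apply: contraNneq Xi_neq; rewrite !phiP => ->.
by apply: contraNneq Xi_neq => ->.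
Qed.

Lemma fiber_card_nI v : fiber_card phi v = nI n (w v).
Proof.
rewrite /nI size_filter -(card_nth 0%N); apply: eq_card => a; rewrite !inE.
by apply/eqP/eqP => [<-|Xi_a]; [rewrite phiP | apply: Xi_nth_VG_inj; rewrite -phiP].
Qed.

Lemma CA_conj_diag : CA R n =
  \matrix_(i, j) (Num.sqrt (nI n (w i))%:R * adjG i j * Num.sqrt (nI n (w j))%:R).
Proof.
apply/matrixP => i j; rewrite !mxE; case: ifP => _; rewrite ?mulr0 ?mul0r ?mulr1 //.
by rewrite natrM sqrtrM ?ler0n.
Qed.

Lemma char_poly_adjU_class_map :
  'X ^+ K * char_poly (adjU R n) = 'X ^+ N * char_poly (CA R n).
Proof.
rewrite adjU_blowup char_poly_blowup CA_conj_diag char_poly_conj_diag.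
congr (_ * char_poly (_ *m diag_mx _)); apply/rowP => v.
by rewrite !mxE fiber_card_nI sqr_sqrtr ?ler0n.
Qed.

End ClassMap.

Lemma char_poly_adjU (R : rcfType) (n : nat) : (0 < n)%N ->
  'X ^+ size (VG n) * char_poly (adjU R n) = 'X ^+ size (Uset n) * char_poly (CA R n).
Proof.
move=> n_gt0; have [phi phiP] := fin_all_exists (exists_Xi_nth_VG n_gt0).
exact: char_poly_adjU_class_map phiP.
Qed.

Theorem mainTheorem8 (R : rcfType) (n : nat) (hn : (0 < n)%N)
    (hm : exists2 i, (i < kp n)%N & (1 < ex n i)%N) :
  char_poly (adjU R n) =
  'X ^+ (Tn n - mn n - (2 ^ kp n - 2))%N * char_poly (CA R n).
Proof.
have k_gt0 : (0 < kp n)%N by case: hm => i ik _; apply: leq_ltn_trans ik.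
apply: (@mulfI _ ('X ^+ size (VG n))); first by rewrite expf_neq0 ?polyX_eq0.
rewrite char_poly_adjU // mulrA -exprD -size_Uset // -size_VG //.
by rewrite subnKC ?size_VG_leq_Uset.
Qed.
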